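(* For every pointed pseudotopological space $(X,x_0)$ and every pointed epitopological space $(X',x_0')$, concatenation and inversion of loops give $\Omega^{\mathrm{ps}}(X,x_0)$ (in the category of pointed pseudotopological spaces) and $\Omega^{\mathrm{epi}}(X',x_0')$ (in the category of pointed epitopological spaces) the structure of H-groups.
   Context: For a set $X$, $U(X)$ is the set of ultrafilters on $X$, $\dot x$ the principal ultrafilter at $x$; $f_*\mathscr F=\{S:f^{-1}(S)\in\mathscr F\}$. A pseudotopological space is a set $X$ with $u\subset U(X)\times X$ containing all $(\dot x,x)$; write $\mathscr U\to x$; for a filter, $\mathscr F\to x$ means every finer ultrafilter converges to $x$. Continuous maps: $\mathscr U\to x\Rightarrow f_*\mathscr U\to f(x)$. Subspaces and products carry initial structures. Topological spaces are regarded as pseudotopological via ultrafilter convergence. For pseudotopological $X,Y$, $Y^X$ is the set of continuous maps $X\to Y$ with: a filter $\mathscr F\to f$ iff for every filter $\mathscr G\to x$ in $X$, $\mathrm{ev}_*(\mathscr F\times\mathscr G)\to f(x)$. A pseudotopological space is epitopological if its structure is initial w.r.t. some family of maps $X\to Z_j^{Y_j}$, $Y_j,Z_j$ topological; these form the cartesian closed category $\mathsf{EpiTop}$ with the same products and subspaces. $\Omega^{\mathrm{ps}}(X,x_0)$ is the set of loops $l\colon[0,1]\to X$ with $l(0)=l(1)=x_0$ with the subspace structure of $X^{[0,1]}$, basepoint the constant loop $e$; $\Omega^{\mathrm{epi}}$ is the same using the exponential object of $\mathsf{EpiTop}$. Concatenation: $(l\cdot l')(t)=l(2t)$ for $t\le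 1/2$ and $l'(2t-1)$ for $t\ge1/2$; inversion: $l^{-1}(t)=l(1-t)$. Two pointed continuous maps $f,g\colon (A,a_0)\to(B,b_0)$ are pointed homotopic if there is a continuous $H\colon A\times[0,1]\to B$ with $H(\cdot,0)=f$, $H(\cdot,1)=g$, $H(a_0,s)=b_0$ for all $s$. An H-group structure on a pointed space $(A,a_0)$ consists of pointed continuous maps $\wedge\colon A\times A\to A$ and $\sigma\colon A\to A$ such that: $x\mapsto x\wedge a_0$ and $x\mapsto a_0\wedge x$ are pointed homotopic to $\mathrm{id}_A$; $x\mapsto x\wedge\sigma(x)$ and $x\mapsto\sigma(x)\wedge x$ are pointed homotopic to the constant map at $a_0$; $(x,x',x'')\mapsto(x\wedge x')\wedge x''$ is pointed homotopic to $(x,x',x'')\mapsto x\wedge(x'\wedge x'')$. *)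

From Stdlib Require Import Reals Lra.
Open Scope R_scope.
Set Implicit Arguments.

Definition filt (X : Type) := (X -> Prop) -> Prop.

Record is_filter (X : Type) (F : filt X) : Prop := {
  filter_full : F (fun _ => True);
  filter_mono : forall A B : X -> Prop, (forall x, A x -> B x) -> F A -> F B;
  filter_inter : forall A B : X -> Prop, F A -> F B -> F (fun x => A x /\ B x);
  filter_proper : ~ F (fun _ => False) }.

Definition is_ultra (X : Type) (U : filt X) : Prop :=
  is_filter U /\ forall A : X -> Prop, U A \/ U (fun x => ~ A x).

Definition principal (X : Type) (x : X) : filt X := fun A => A x.

Definition pushf (X Y : Type) (f : X -> Y) (F : filt X) : filt Y :=
  fun S => F (fun x => S (f x)).

Definition finer (X : Type) (G F : filt X) : Prop := forall A, F A -> G A.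

Definition fprod (X Y : Type) (F : filt X) (G : filt Y) : filt (X * Y) :=
  fun S => exists (A : X -> Prop) (B : Y -> Prop),
    F A /\ G B /\ forall a b, A a -> B b -> S (a, b).

(** * Convergence structures (a relation between ultrafilters and points). *)
Record PsStr := { pcar :> Type; conv : filt pcar -> pcar -> Prop }.

Definition pseudotop (X : PsStr) : Prop :=
  (forall U x, conv X U x -> is_ultra U) /\ (forall x : X, conv X (principal x) x).

Definition fconv (X : PsStr) (F : filt X) (x : X) : Prop :=
  forall U, is_ultra U -> finer U F -> conv X U x.

Definition continuous (X Y : PsStr) (f : X -> Y) : Prop :=
  forall U x, conv X U x -> conv Y (pushf f U) (f x).

Definition prodPs (X Y : PsStr) : PsStr :=
  {| pcar := (X * Y)%type;
     conv := fun U p => is_ultra U /\ conv X (pushf fst U) (fst p)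
                                   /\ conv Y (pushf snd U) (snd p) |}.

Definition subPs (X : PsStr) (P : X -> Prop) : PsStr :=
  {| pcar := {x : X | P x};
     conv := fun U x => is_ultra U /\ conv X (pushf (@proj1_sig _ _) U) (proj1_sig x) |}.

Definition CF (X Y : PsStr) : Type := {f : X -> Y | continuous X Y f}.

Definition evCF (X Y : PsStr) (p : CF X Y * X) : Y := proj1_sig (fst p) (snd p).

Definition exp_conv (X Y : PsStr) : filt (CF X Y) -> CF X Y -> Prop :=
  fun U f => is_ultra U /\
    forall (G : filt X) (x : X), is_filter G -> fconv X G x ->
      fconv Y (pushf (fun p => @evCF X Y p) (fprod U G)) (proj1_sig f x).

Definition expPs (X Y : PsStr) : PsStr := {| pcar := CF X Y; conv := @exp_conv X Y |}.

Record TopSp := { tcar : Type; opens : (tcar -> Prop) -> Prop }.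

Definition is_topology (T : TopSp) : Prop :=
  opens T (fun _ => True) /\
  (forall A B, opens T A -> opens T B -> opens T (fun x => A x /\ B x)) /\
  (forall (J : Type) (O : J -> tcar T -> Prop), (forall j, opens T (O j)) ->
     opens T (fun x => exists j, O j x)).

Definition top2ps (T : TopSp) : PsStr :=
  {| pcar := tcar T;
     conv := fun U x => is_ultra U /\ forall O, opens T O -> O x -> U O |}.

(** * Epitopological spaces: initial w.r.t. a family of maps into Z_j^{Y_j} *)
Definition epitop (X : PsStr) : Prop :=
  pseudotop X /\
  exists (J : Type) (Y Z : J -> TopSp)
         (f : forall j, X -> expPs (top2ps (Y j)) (top2ps (Z j))),
    (forall j, is_topology (Y j) /\ is_topology (Z j)) /\
    forall U x, conv X U x <->
      (is_ultra U /\ forall j, conv _ (pushf (f j) U) (f j x)).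

(** A structure [s] on the set of continuous maps A -> B is the exponential
    object of EpiTop (with evaluation as counit): it is epitopological,
    evaluation is continuous, and every continuous h : C x A -> B with C
    epitopological has a continuous transpose C -> B^A. *)
Definition epi_exp_structure (A B : PsStr) (s : filt (CF A B) -> CF A B -> Prop) : Prop :=
  let E := {| pcar := CF A B; conv := s |} in
  epitop E /\
  continuous (prodPs E A) B (fun p => proj1_sig (fst p) (snd p)) /\
  forall C : PsStr, epitop C -> forall h : C * A -> B, continuous (prodPs C A) B h ->
    exists hc : C -> E, continuous C E hc /\ forall c a, proj1_sig (hc c) a = h (c, a).

Definition Icar : Type := {t : R | 0 <= t <= 1}.

Definition Itop : TopSp :=
  {| tcar := Icar;
     opens := fun O => forall t, O t -> exists eps, eps > 0 /\
               forall s : Icar, Rabs (proj1_sig s - proj1_sig t) < eps -> O s |}.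

Definition Ips : PsStr := top2ps Itop.

Lemma I0_proof : 0 <= 0 <= 1. Proof. lra. Qed.
Lemma I1_proof : 0 <= 1 <= 1. Proof. lra. Qed.
Definition I0 : Ips := exist _ 0 I0_proof.
Definition I1 : Ips := exist _ 1 I1_proof.

Lemma clamp_proof (r : R) : 0 <= Rmax 0 (Rmin 1 r) <= 1.
Proof.
  split; [apply Rmax_l|]. apply Rmax_lub; [lra| apply Rmin_l].
Qed.
(** clamp r : the point of [0,1] closest to r (only used for r in [0,1]) *)
Definition clamp (r : R) : Icar := exist _ (Rmax 0 (Rmin 1 r)) (clamp_proof r).

Definition concat_fun (X : Type) (l l' : Icar -> X) (t : Icar) : X :=
  if Rle_dec (proj1_sig t) (1/2) then l (clamp (2 * proj1_sig t))
  else l' (clamp (2 * proj1_sig t - 1)).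

Definition inv_fun (X : Type) (l : Icar -> X) (t : Icar) : X :=
  l (clamp (1 - proj1_sig t)).

Definition OmegaPs (X : PsStr) (s : filt (CF Ips X) -> CF Ips X -> Prop) (x0 : X) : PsStr :=
  subPs {| pcar := CF Ips X; conv := s |}
        (fun f => proj1_sig f I0 = x0 /\ proj1_sig f I1 = x0).

Definition loopf (X : PsStr) s (x0 : X) (l : OmegaPs s x0) : Icar -> X :=
  proj1_sig (proj1_sig l).

Definition phomotopic (A B : PsStr) (a0 : A) (b0 : B) (f g : A -> B) : Prop :=
  exists H : prodPs A Ips -> B,
    continuous (prodPs A Ips) B H /\
    (forall a, H (a, I0) = f a) /\ (forall a, H (a, I1) = g a) /\
    (forall s, H (a0, s) = b0).

Definition Hgroup (A : PsStr) (a0 : A) (w : prodPs A A -> A) (sg : A -> A) : Prop :=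
  continuous (prodPs A A) A w /\ w (a0, a0) = a0 /\
  continuous A A sg /\ sg a0 = a0 /\
  @phomotopic A A a0 a0 (fun x => w (x, a0)) (fun x => x) /\
  @phomotopic A A a0 a0 (fun x => w (a0, x)) (fun x => x) /\
  @phomotopic A A a0 a0 (fun x => w (x, sg x)) (fun _ => a0) /\
  @phomotopic A A a0 a0 (fun x => w (sg x, x)) (fun _ => a0) /\
  @phomotopic (prodPs (prodPs A A) A) A ((a0, a0), a0) a0
    (fun p => w (w (fst (fst p), snd (fst p)), snd p))
    (fun p => w (fst (fst p), w (snd (fst p), snd p))).

Definition loops_Hgroup (X : PsStr) (x0 : X) (s : filt (CF Ips X) -> CF Ips X -> Prop) : Prop :=
  exists (e : OmegaPs s x0) (w : prodPs (OmegaPs s x0) (OmegaPs s x0) -> OmegaPs s x0)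
         (sg : OmegaPs s x0 -> OmegaPs s x0),
    (forall t, loopf e t = x0) /\
    (forall l l' t, loopf (w (l, l')) t = concat_fun (loopf l) (loopf l') t) /\
    (forall l t, loopf (sg l) t = inv_fun (loopf l) t) /\
    Hgroup e w sg.

(** Loops are produced by transposition: a continuous [h : C x [0,1] -> X] with
    [h (c, 0) = h (c, 1) = x0] transposes to a continuous family [C -> Omega(X, x0)]
    whenever [C] lies in a class of spaces closed under products and containing [[0,1]]
    and [Omega(X, x0)] (pseudotopological, resp. epitopological spaces).  This yields
    concatenation and inversion.  Each H-group law compares a reparametrization
    [F c o phi0] of a loop family [F] with [F c o phi1], and the straight-line homotopy
    [(1 - s) phi0 + s phi1] of reparametrizations transposes to a pointed homotopy.
    For the pseudotopological exponential, transposition holds because ultrafilters lift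
    along maps; in EpiTop it is the universal property of the exponential. *)

From Stdlib Require Import Reals Lra ProofIrrelevance FunctionalExtensionality PropExtensionality Classical.
From mathcomp Require classical_sets filter.

Open Scope R_scope.

(** * Filters and ultrafilters *)

Lemma ultrafilter_finer {X : Type} {F : filt X} : is_filter F -> exists U, is_ultra U /\ finer U F.
Proof.
  intros [F_full F_mono F_inter F_proper].
  assert (PF : filter.ProperFilter (F : classical_sets.set_system X)).
  { constructor; [exact F_proper|constructor; [exact F_full|exact F_inter|exact F_mono]]. }
  destruct (filter.ultraFilterLemma PF) as [U [UU FU]].
  destruct (@filter.ultra_proper _ _ UU) as [U_proper [U_full U_inter U_mono]].
  exists U; split; [|exact FU]. split.
  - constructor; [exact U_full|exact U_mono|exact U_inter|exact U_proper].
  - intros A. exact (filter.in_ultra_setVsetC A UU).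
Qed.

Lemma ultra_filter {X : Type} {U : filt X} : is_ultra U -> is_filter U.
Proof. intros [h _]; exact h. Qed.

Lemma push_filter {X Y : Type} (f : X -> Y) {F : filt X} : is_filter F -> is_filter (pushf f F).
Proof.
  intros [h1 h2 h3 h4]. constructor; unfold pushf.
  - exact h1.
  - intros A B AB. apply h2. intros x. apply AB.
  - intros A B. apply h3.
  - exact h4.
Qed.

Lemma ultra_push {X Y : Type} (f : X -> Y) {U : filt X} : is_ultra U -> is_ultra (pushf f U).
Proof.
  intros [HU Ucompl]. split; [exact (push_filter f HU)|].
  intros A. exact (Ucompl (fun x => A (f x))).
Qed.

Lemma principal_ultra {X : Type} (x : X) : is_ultra (principal x).
Proof.
  split; [constructor; unfold principal; auto|]. intros A. apply classic.
Qed.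

Lemma filt_ext {X : Type} {F G : filt X} : (forall S, F S <-> G S) -> F = G.
Proof.
  intros FG. apply functional_extensionality. intros S. apply propositional_extensionality, FG.
Qed.

Lemma filter_nonempty {X : Type} {F : filt X} {A : X -> Prop} : is_filter F -> F A -> exists x, A x.
Proof.
  intros HF FA. apply NNPP. intros nA. apply (filter_proper HF).
  apply (filter_mono HF A); [|exact FA]. intros x Ax. apply nA. exists x; exact Ax.
Qed.

Lemma ultra_max {X : Type} {U G : filt X} : is_ultra U -> is_filter G -> finer G U -> G = U.
Proof.
  intros [_ Ucompl] HG GU. apply filt_ext. intros S. split; [|apply GU].
  intros GS. destruct (Ucompl S) as [US|UnS]; [exact US|].
  destruct (filter_nonempty HG (filter_inter HG _ _ GS (GU _ UnS))) as [x [Sx nSx]].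
  contradiction.
Qed.

Lemma push_const {X Y : Type} (y : Y) {F : filt X} : is_filter F -> pushf (fun _ => y) F = principal y.
Proof.
  intros HF. apply filt_ext. intros S. unfold pushf, principal. split.
  - intros FS. destruct (filter_nonempty HF FS) as [_ Sy]. exact Sy.
  - intros Sy. apply (filter_mono HF (fun _ => True)); [auto|apply (filter_full HF)].
Qed.

Lemma push_agree {X Y : Type} {F : filt X} {A : X -> Prop} {f g : X -> Y} :
  is_filter F -> F A -> (forall x, A x -> f x = g x) -> pushf f F = pushf g F.
Proof.
  intros HF FA fg. apply filt_ext. intros S. unfold pushf.
  split; intros FS; refine (filter_mono HF _ _ _ (filter_inter HF _ _ FA FS));
    intros x [Ax Sx]; [rewrite <- fg | rewrite fg]; assumption.
Qed.

Lemma fprod_filter {X Y : Type} {F : filt X} {G : filt Y} :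
  is_filter F -> is_filter G -> is_filter (fprod F G).
Proof.
  intros HF HG. constructor.
  - exists (fun _ => True), (fun _ => True). split; [apply (filter_full HF)|].
    split; [apply (filter_full HG)|auto].
  - intros S S' SS' [A [B [FA [GB AB]]]]. exists A, B. auto.
  - intros S S' [A [B [FA [GB AB]]]] [A' [B' [FA' [GB' AB']]]].
    exists (fun x => A x /\ A' x), (fun y => B y /\ B' y).
    split; [apply (filter_inter HF); assumption|].
    split; [apply (filter_inter HG); assumption|].
    intros a b [] []. auto.
  - intros [A [B [FA [GB AB]]]].
    destruct (filter_nonempty HF FA) as [a Aa], (filter_nonempty HG GB) as [b Bb].
    exact (AB a b Aa Bb).
Qed.

Lemma ultra_lift {X Y : Type} {f : X -> Y} {F : filt X} {W : filt Y} :
  is_filter F -> is_ultra W -> finer W (pushf f F) ->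
  exists Q, is_ultra Q /\ finer Q F /\ pushf f Q = W.
Proof.
  intros HF HW Wf. pose proof (ultra_filter HW) as HWf.
  pose (FW := fun S : X -> Prop => exists A B, F A /\ W B /\ forall x, A x -> B (f x) -> S x).
  assert (HFW : is_filter FW).
  { constructor.
    - exists (fun _ => True), (fun _ => True).
      split; [apply (filter_full HF)|split; [apply (filter_full HWf)|auto]].
    - intros S S' SS' [A [B [FA [WB AB]]]]. exists A, B. auto.
    - intros S S' [A [B [FA [WB AB]]]] [A' [B' [FA' [WB' AB']]]].
      exists (fun x => A x /\ A' x), (fun y => B y /\ B' y).
      split; [apply (filter_inter HF); assumption|].
      split; [apply (filter_inter HWf); assumption|].
      intros x [] []. auto.
    - intros [A [B [FA [WB AB]]]].
      assert (WnB : W (fun y => ~ B y)).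
      { apply Wf. apply (filter_mono HF A); [|exact FA]. intros x Ax Bfx. exact (AB x Ax Bfx). }
      destruct (filter_nonempty HWf (filter_inter HWf _ _ WB WnB)) as [y [By nBy]].
      contradiction. }
  destruct (ultrafilter_finer HFW) as [Q [HQ QFW]].
  exists Q. split; [exact HQ|]. split.
  - intros A FA. apply QFW. exists A, (fun _ => True).
    split; [exact FA|split; [apply (filter_full HWf)|auto]].
  - apply ultra_max; [exact HW|apply push_filter, ultra_filter, HQ|].
    intros B WB. apply QFW. exists (fun _ => True), B.
    split; [apply (filter_full HF)|split; [exact WB|auto]].
Qed.

(** * Continuity *)

Definition conv_ultra (X : PsStr) : Prop := forall U x, conv X U x -> is_ultra U.

Lemma pseudotop_conv_ultra {X : PsStr} : pseudotop X -> conv_ultra X.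
Proof. intros [h _]; exact h. Qed.

Lemma conv_ultra_prod {X Y : PsStr} : conv_ultra (prodPs X Y).
Proof. intros U x [h _]; exact h. Qed.

Lemma conv_ultra_sub {X : PsStr} {P : X -> Prop} : conv_ultra (subPs X P).
Proof. intros U x [h _]; exact h. Qed.

Lemma conv_fconv {X : PsStr} {U : filt X} {x : X} : is_ultra U -> conv X U x -> fconv X U x.
Proof. intros HU Ux W HW WU. rewrite (ultra_max HU (ultra_filter HW) WU). exact Ux. Qed.

Lemma cont_id {X : PsStr} : continuous X X (fun x => x).
Proof. intros U x Ux. exact Ux. Qed.

Lemma cont_comp {X Y Z : PsStr} {f : X -> Y} {g : Y -> Z} :
  continuous X Y f -> continuous Y Z g -> continuous X Z (fun x => g (f x)).
Proof. intros hf hg U x Ux. exact (hg _ _ (hf _ _ Ux)). Qed.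

Lemma cont_pair {X Y Z : PsStr} {f : X -> Y} {g : X -> Z} : conv_ultra X ->
  continuous X Y f -> continuous X Z g -> continuous X (prodPs Y Z) (fun x => (f x, g x)).
Proof.
  intros hX hf hg U x Ux. split; [exact (ultra_push _ (hX _ _ Ux))|].
  split; [exact (hf _ _ Ux)|exact (hg _ _ Ux)].
Qed.

Lemma cont_fst {X Y : PsStr} : continuous (prodPs X Y) X fst.
Proof. intros U x [_ [h _]]. exact h. Qed.

Lemma cont_snd {X Y : PsStr} : continuous (prodPs X Y) Y snd.
Proof. intros U x [_ [_ h]]. exact h. Qed.

Lemma cont_const {X Y : PsStr} (y : Y) : conv_ultra X -> pseudotop Y -> continuous X Y (fun _ => y).
Proof.
  intros hX hY U x Ux. rewrite push_const by exact (ultra_filter (hX _ _ Ux)). apply (proj2 hY).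
Qed.

Lemma cont_val {X : PsStr} {P : X -> Prop} : continuous (subPs X P) X (@proj1_sig _ _).
Proof. intros U x [_ h]. exact h. Qed.

Lemma cont_into_sub {X Y : PsStr} {P : Y -> Prop} (f : X -> subPs Y P) : conv_ultra X ->
  continuous X Y (fun x => proj1_sig (f x)) -> continuous X (subPs Y P) f.
Proof. intros hX hf U x Ux. split; [exact (ultra_push _ (hX _ _ Ux))|exact (hf _ _ Ux)]. Qed.

Lemma pseudotop_prod {X Y : PsStr} : pseudotop X -> pseudotop Y -> pseudotop (prodPs X Y).
Proof.
  intros hX hY. split; [apply conv_ultra_prod|].
  intros [x y]. split; [apply principal_ultra|split; [apply (proj2 hX)|apply (proj2 hY)]].
Qed.

Lemma pseudotop_sub {X : PsStr} (P : X -> Prop) : pseudotop X -> pseudotop (subPs X P).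
Proof.
  intros hX. split; [intros U x [h _]; exact h|].
  intros x. split; [apply principal_ultra|apply (proj2 hX)].
Qed.

Lemma pseudotop_top2ps (T : TopSp) : pseudotop (top2ps T).
Proof.
  split; [intros U x [h _]; exact h|].
  intros x. split; [apply principal_ultra|]. intros O _ Ox. exact Ox.
Qed.

(** * Real-valued maps *)

Definition clampR (r : R) : R := Rmax 0 (Rmin 1 r).

Ltac destruct_Rle :=
  repeat match goal with |- context [Rle_dec ?a ?b] =>
    lazymatch a with context [Rle_dec _ _] => fail | _ =>
    lazymatch b with context [Rle_dec _ _] => fail | _ => destruct (Rle_dec a b) end end end.

Ltac clamp_arith := cbv beta; unfold clampR, Rmax, Rmin; destruct_Rle; lra.

Lemma clampR_id (r : R) : 0 <= r <= 1 -> clampR r = r.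
Proof. intros. clamp_arith. Qed.

Lemma clampR_lipschitz (a b : R) : Rabs (clampR a - clampR b) <= Rabs (a - b).
Proof.
  unfold clampR, Rmax, Rmin, Rabs. repeat destruct Rle_dec; repeat destruct Rcase_abs; lra.
Qed.

Lemma Icar_eq (a b : Icar) : proj1_sig a = proj1_sig b -> a = b.
Proof.
  destruct a as [a a01], b as [b b01]. simpl. intros e. subst b. f_equal. apply proof_irrelevance.
Qed.

Lemma clamp_val (t : Icar) : clamp (proj1_sig t) = t.
Proof. apply Icar_eq. apply clampR_id, (proj2_sig t). Qed.

Definition real_cont (X : PsStr) (g : X -> R) : Prop :=
  forall U x, conv X U x -> is_filter U ->
    forall eps, 0 < eps -> U (fun y => Rabs (g y - g x) < eps).

Lemma real_cont_const {X : PsStr} (r : R) : real_cont X (fun _ => r).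
Proof.
  intros U x _ HU eps eps_pos. apply (filter_mono HU (fun _ => True)); [|apply (filter_full HU)].
  intros. rewrite Rminus_diag, Rabs_R0. exact eps_pos.
Qed.

Lemma real_cont_val : real_cont Ips (@proj1_sig _ _).
Proof.
  intros U t [_ Ut] _ eps eps_pos. apply Ut.
  - intros t' close. exists (eps - Rabs (proj1_sig t' - proj1_sig t)). split; [lra|].
    intros t'' close'.
    replace (proj1_sig t'' - proj1_sig t) with
      ((proj1_sig t'' - proj1_sig t') + (proj1_sig t' - proj1_sig t)) by ring.
    eapply Rle_lt_trans; [apply Rabs_triang|lra].
  - rewrite Rminus_diag, Rabs_R0. exact eps_pos.
Qed.

Lemma real_cont_comp {X Y : PsStr} {f : X -> Y} {g : Y -> R} :
  continuous X Y f -> real_cont Y g -> real_cont X (fun x => g (f x)).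
Proof. intros hf hg U x Ux HU. exact (hg _ _ (hf _ _ Ux) (push_filter f HU)). Qed.

Lemma real_cont_lipschitz {X : PsStr} (k : R -> R) {g : X -> R} :
  (forall a b, Rabs (k a - k b) <= Rabs (a - b)) -> real_cont X g -> real_cont X (fun x => k (g x)).
Proof.
  intros k_lip hg U x Ux HU eps eps_pos.
  apply (filter_mono HU _ _ (fun y close => Rle_lt_trans _ _ _ (k_lip _ _) close)).
  exact (hg _ _ Ux HU eps eps_pos).
Qed.

Lemma real_cont_plus {X : PsStr} {f g : X -> R} :
  real_cont X f -> real_cont X g -> real_cont X (fun x => f x + g x).
Proof.
  intros hf hg U x Ux HU eps eps_pos.
  apply (filter_mono HU (fun y => Rabs (f y - f x) < eps / 2 /\ Rabs (g y - g x) < eps / 2)).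
  - intros y [fy gy].
    replace (f y + g y - (f x + g x)) with ((f y - f x) + (g y - g x)) by ring.
    eapply Rle_lt_trans; [apply Rabs_triang|lra].
  - apply (filter_inter HU); [apply hf|apply hg]; auto; lra.
Qed.

Lemma real_cont_opp {X : PsStr} {g : X -> R} : real_cont X g -> real_cont X (fun x => - g x).
Proof.
  apply (real_cont_lipschitz Ropp). intros a b. rewrite <- Rabs_Ropp. right. f_equal. ring.
Qed.

Lemma real_cont_minus {X : PsStr} {f g : X -> R} :
  real_cont X f -> real_cont X g -> real_cont X (fun x => f x - g x).
Proof. intros hf hg. exact (real_cont_plus hf (real_cont_opp hg)). Qed.

Lemma real_cont_mult {X : PsStr} {f g : X -> R} :
  real_cont X f -> real_cont X g -> real_cont X (fun x => f x * g x).
Proof.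
  intros hf hg U x Ux HU eps eps_pos.
  set (M := 1 + Rabs (f x) + Rabs (g x)).
  assert (M_ge1 : 1 <= M) by (pose proof (Rabs_pos (f x)); pose proof (Rabs_pos (g x)); unfold M; lra).
  set (d := Rmin 1 (eps / M)).
  assert (d_pos : 0 < d) by (apply Rmin_glb_lt; [lra|apply Rdiv_lt_0_compat; lra]).
  assert (dM : d * M <= eps).
  { apply Rle_trans with (eps / M * M); [apply Rmult_le_compat_r; [lra|apply Rmin_r]|].
    right. field. lra. }
  apply (filter_mono HU (fun y => Rabs (f y - f x) < d /\ Rabs (g y - g x) < d)).
  - intros y [fy gy].
    replace (f y * g y - f x * g x) with
      ((f y - f x) * (g y - g x) + f x * (g y - g x) + g x * (f y - f x)) by ring.
    assert (triangle : Rabs ((f y - f x) * (g y - g x) + f x * (g y - g x) + g x * (f y - f x))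
      <= Rabs (f y - f x) * Rabs (g y - g x) + Rabs (f x) * Rabs (g y - g x)
         + Rabs (g x) * Rabs (f y - f x)).
    { rewrite <- !Rabs_mult. eapply Rle_trans; [apply Rabs_triang|].
      apply Rplus_le_compat_r, Rabs_triang. }
    assert (d_le1 : d <= 1) by apply Rmin_l.
    pose proof (Rabs_pos (f y - f x)). pose proof (Rabs_pos (g y - g x)).
    pose proof (Rabs_pos (f x)). pose proof (Rabs_pos (g x)).
    unfold M in dM. nra.
  - apply (filter_inter HU); [apply hf|apply hg]; auto.
Qed.

Ltac real_cont_Ips :=
  cbv beta; repeat first [ apply real_cont_val | apply real_cont_const | apply real_cont_minus
               | apply real_cont_plus | apply real_cont_mult
               | apply (real_cont_lipschitz clampR clampR_lipschitz) ].

Lemma cont_clamp {X : PsStr} {g : X -> R} :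
  conv_ultra X -> real_cont X g -> continuous X Ips (fun x => clamp (g x)).
Proof.
  intros hX hg U x Ux. pose proof (hX _ _ Ux) as HU. split; [exact (ultra_push _ HU)|].
  intros O HO Ox. destruct (HO _ Ox) as [eps [eps_pos ball_O]].
  apply (filter_mono (ultra_filter HU) (fun y => Rabs (g y - g x) < eps)).
  - intros y close. apply ball_O. eapply Rle_lt_trans; [apply clampR_lipschitz|exact close].
  - exact (hg _ _ Ux (ultra_filter HU) eps eps_pos).
Qed.

Lemma real_cont_closed_le {X : PsStr} {k : X -> R} {U : filt X} {x : X} :
  real_cont X k -> conv X U x -> is_filter U -> U (fun y => k y <= 0) -> k x <= 0.
Proof.
  intros hk Ux HU Uneg. apply Rnot_lt_le. intros kx_pos.
  destruct (filter_nonempty HU (filter_inter HU _ _ Uneg (hk _ _ Ux HU _ kx_pos)))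
    as [y [ky close]].
  unfold Rabs in close. destruct Rcase_abs in close; lra.
Qed.

Lemma cont_glue {X Y : PsStr} (k : X -> R) (h g1 g2 : X -> Y) : conv_ultra X -> real_cont X k ->
  continuous X Y g1 -> continuous X Y g2 ->
  (forall x, k x <= 0 -> h x = g1 x) -> (forall x, 0 <= k x -> h x = g2 x) -> continuous X Y h.
Proof.
  intros hX hk hg1 hg2 h_g1 h_g2 U x Ux.
  pose proof (hX _ _ Ux) as HU. pose proof (ultra_filter HU) as HUf.
  destruct (proj2 HU (fun y => k y <= 0)) as [Uneg|Unpos].
  - rewrite (h_g1 x (real_cont_closed_le hk Ux HUf Uneg)), (push_agree HUf Uneg h_g1).
    exact (hg1 _ _ Ux).
  - assert (Upos : U (fun y => - k y <= 0)).
    { refine (filter_mono HUf _ _ _ Unpos). intros y nky. lra. }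
    assert (Upos' : U (fun y => 0 <= k y)).
    { refine (filter_mono HUf _ _ _ Upos). intros y nky. lra. }
    pose proof (real_cont_closed_le (real_cont_opp hk) Ux HUf Upos) as kx_pos.
    rewrite (h_g2 x ltac:(lra)), (push_agree HUf Upos' h_g2). exact (hg2 _ _ Ux).
Qed.

(** * The pseudotopological exponential *)

Lemma exp_ev {A B : PsStr} : continuous (prodPs (expPs A B) A) B (fun p => proj1_sig (fst p) (snd p)).
Proof.
  intros U [f a] [HU [[_ Uf] Ua]]. pose proof (ultra_push snd HU) as HUa.
  apply (Uf _ a (ultra_filter HUa) (conv_fconv HUa Ua)); [exact (ultra_push _ HU)|].
  intros S [A1 [B1 [UA1 [UB1 AB]]]].
  apply (filter_mono (ultra_filter HU) (fun p => A1 (fst p) /\ B1 (snd p))).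
  - intros p [A1p B1p]. exact (AB _ _ A1p B1p).
  - exact (filter_inter (ultra_filter HU) _ _ UA1 UB1).
Qed.

Lemma pseudotop_exp {A B : PsStr} : pseudotop (expPs A B).
Proof.
  split; [intros U f [HU _]; exact HU|].
  intros f. split; [apply principal_ultra|].
  intros G a HG Ga W HW Wf.
  assert (Wf' : finer W (pushf (proj1_sig f) G)).
  { intros S GS. apply Wf. exists (fun g => g = f), (fun x => S (proj1_sig f x)).
    split; [reflexivity|split; [exact GS|]]. intros g x -> Sx. exact Sx. }
  destruct (ultra_lift HG HW Wf') as [Q [HQ [QG <-]]].
  exact (proj2_sig f _ _ (Ga Q HQ QG)).
Qed.

Lemma exp_transpose {A B C : PsStr} (h : prodPs C A -> B) :
  pseudotop C -> conv_ultra A -> continuous (prodPs C A) B h ->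
  exists hc : C -> expPs A B, continuous C (expPs A B) hc /\ forall c a, proj1_sig (hc c) a = h (c, a).
Proof.
  intros hC hA hh.
  assert (section : forall c, continuous A B (fun a => h (c, a))).
  { intros c. exact (cont_comp (cont_pair hA (cont_const c hA hC) cont_id) hh). }
  exists (fun c => exist _ (fun a => h (c, a)) (section c)). split; [|reflexivity].
  intros V c Vc. pose proof (proj1 hC _ _ Vc) as HV. pose proof (ultra_filter HV) as HVf.
  split; [exact (ultra_push _ HV)|].
  intros G a HG Ga W HW Wf.
  assert (Wf' : finer W (pushf h (fprod V G))).
  { intros S [A1 [B1 [VA1 [GB1 AB]]]]. apply Wf.
    exists (fun f => exists c', A1 c' /\ f = exist _ (fun a => h (c', a)) (section c')), B1.
    split; [apply (filter_mono HVf A1); [intros c' A1c'; exists c'; auto|exact VA1]|].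
    split; [exact GB1|]. intros f b [c' [A1c' ->]] B1b. exact (AB c' b A1c' B1b). }
  destruct (ultra_lift (fprod_filter HVf HG) HW Wf') as [Q [HQ [QVG <-]]].
  apply hh. split; [exact HQ|]. split.
  - replace (pushf fst Q) with V; [exact Vc|].
    symmetry. apply ultra_max; [exact HV|exact (push_filter _ (ultra_filter HQ))|].
    intros S VS. apply QVG. exists S, (fun _ => True).
    split; [exact VS|split; [apply (filter_full HG)|auto]].
  - apply Ga; [exact (ultra_push _ HQ)|].
    intros S GS. apply QVG. exists (fun _ => True), S.
    split; [apply (filter_full HVf)|split; [exact GS|auto]].
Qed.

(** * Epitopological spaces *)

Lemma epitop_prod {A B : PsStr} : epitop A -> epitop B -> epitop (prodPs A B).
Proof.
  intros [pA [J1 [Y1 [Z1 [f1 [top1 init1]]]]]] [pB [J2 [Y2 [Z2 [f2 [top2 init2]]]]]].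
  split; [exact (pseudotop_prod pA pB)|].
  exists (J1 + J2)%type, (fun j => match j with inl i => Y1 i | inr i => Y2 i end),
    (fun j => match j with inl i => Z1 i | inr i => Z2 i end),
    (fun j => match j as j0 return prodPs A B ->
                 expPs (top2ps (match j0 with inl i => Y1 i | inr i => Y2 i end))
                       (top2ps (match j0 with inl i => Z1 i | inr i => Z2 i end)) with
              | inl i => fun p => f1 i (fst p) | inr i => fun p => f2 i (snd p) end).
  split; [intros [i|i]; auto|].
  intros U [x y]. split.
  - intros [HU [Ux Uy]]. apply init1 in Ux. apply init2 in Uy.
    split; [exact HU|]. intros [i|i]; [exact (proj2 Ux i)|exact (proj2 Uy i)].
  - intros [HU Uj]. split; [exact HU|]. split.
    + apply init1. split; [exact (ultra_push _ HU)|]. intros i. exact (Uj (inl i)).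
    + apply init2. split; [exact (ultra_push _ HU)|]. intros i. exact (Uj (inr i)).
Qed.

Lemma epitop_sub {A : PsStr} (P : A -> Prop) : epitop A -> epitop (subPs A P).
Proof.
  intros [pA [J [Y [Z [f [top init]]]]]].
  split; [exact (pseudotop_sub P pA)|].
  exists J, Y, Z, (fun j x => f j (proj1_sig x)). split; [exact top|].
  intros U x. split.
  - intros [HU Ux]. split; [exact HU|]. exact (proj2 (proj1 (init _ _) Ux)).
  - intros [HU Uj]. split; [exact HU|]. apply init. split; [exact (ultra_push _ HU)|exact Uj].
Qed.

Lemma Itop_topology : is_topology Itop.
Proof.
  split; [|split]; simpl.
  - intros t _. exists 1. split; [lra|auto].
  - intros O1 O2 open1 open2 t [O1t O2t].
    destruct (open1 t O1t) as [e1 [e1_pos ball1]], (open2 t O2t) as [e2 [e2_pos ball2]].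
    exists (Rmin e1 e2). split; [apply Rmin_glb_lt; assumption|].
    intros t' close. split; [apply ball1|apply ball2];
      eapply Rlt_le_trans; [exact close|apply Rmin_l|exact close|apply Rmin_r].
  - intros J O open t [j Ojt]. destruct (open j t Ojt) as [e [e_pos ball]].
    exists e. split; [exact e_pos|]. intros t' close. exists j. exact (ball t' close).
Qed.

Definition point_top : TopSp := {| tcar := unit; opens := fun _ => True |}.

(** [Ips] is initial for the map sending [t] to the constant map [point -> [0,1]] at [t]. *)
Lemma epitop_Ips : epitop Ips.
Proof.
  split; [apply pseudotop_top2ps|].
  pose (const_map := fun t : Ips =>
    exist _ (fun _ : unit => t) (cont_const t (pseudotop_conv_ultra (pseudotop_top2ps point_top))
                                   (pseudotop_top2ps Itop))
    : expPs (top2ps point_top) Ips).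
  exists unit, (fun _ => point_top), (fun _ => Itop), (fun _ => const_map).
  split; [intros _; split; [repeat split; simpl; auto|exact Itop_topology]|].
  intros U t. split.
  - intros [HU Ut]. split; [exact HU|]. intros _. split; [exact (ultra_push _ HU)|].
    intros G u HG Gu W HW Wf. split; [exact HW|]. intros O open_O Ot. apply Wf.
    exists (fun g => O (proj1_sig g tt)), (fun _ => True).
    split; [exact (Ut O open_O Ot)|split; [apply (filter_full HG)|]].
    intros g [] Og _. exact Og.
  - intros [HU Uj]. destruct (Uj tt) as [_ Uconst].
    assert (point_conv : fconv (top2ps point_top) (principal tt) tt).
    { intros W HW Wf. split; [exact HW|]. intros O _ Ot. exact (Wf O Ot). }
    apply (Uconst _ tt (ultra_filter (principal_ultra tt)) point_conv U HU).
    intros S [A1 [B1 [UA1 [B1tt AB]]]].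
    exact (filter_mono (ultra_filter HU) _ _ (fun t A1t => AB _ tt A1t B1tt) UA1).
Qed.

(** * Loop spaces *)

(** [loop_at l] extends the loop [l] to all of [R], constantly [x0] outside [[0,1]]. *)
Definition loop_at {X : PsStr} {s} {x0 : X} (l : OmegaPs s x0) (r : R) : X := loopf l (clamp r).

Lemma loop_at_le0 {X : PsStr} {s} {x0 : X} (l : OmegaPs s x0) (r : R) : r <= 0 -> loop_at l r = x0.
Proof.
  intros r_le0. destruct l as [f [f0 f1]]. unfold loop_at, loopf. simpl.
  replace (clamp r) with I0; [exact f0|].
  apply Icar_eq. simpl. fold (clampR r). clamp_arith.
Qed.

Lemma loop_at_ge1 {X : PsStr} {s} {x0 : X} (l : OmegaPs s x0) (r : R) : 1 <= r -> loop_at l r = x0.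
Proof.
  intros r_ge1. destruct l as [f [f0 f1]]. unfold loop_at, loopf. simpl.
  replace (clamp r) with I1; [exact f1|].
  apply Icar_eq. simpl. fold (clampR r). clamp_arith.
Qed.

Lemma loop_at_off_unit {X : PsStr} {s} {x0 : X} (l : OmegaPs s x0) (r : R) :
  r <= 0 \/ 1 <= r -> loop_at l r = x0.
Proof. intros [r_le0|r_ge1]; [apply loop_at_le0|apply loop_at_ge1]; assumption. Qed.

Lemma loop_ext {X : PsStr} {s} {x0 : X} {l l' : OmegaPs s x0} :
  (forall r, 0 <= r <= 1 -> loop_at l r = loop_at l' r) -> l = l'.
Proof.
  intros ll'. assert (same : loopf l = loopf l').
  { apply functional_extensionality. intros t.
    rewrite <- (clamp_val t). exact (ll' _ (proj2_sig t)). }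
  destruct l as [[f f_cont] f_loop], l' as [[f' f'_cont] f'_loop]. unfold loopf in same. simpl in same.
  subst f'. rewrite (proof_irrelevance _ f_cont f'_cont). f_equal. apply proof_irrelevance.
Qed.

Ltac loop_arith :=
  cbv beta; unfold clampR, Rmax, Rmin; destruct_Rle;
  repeat match goal with |- context [loop_at ?l ?r] =>
    first [ rewrite (loop_at_le0 l r) by lra | rewrite (loop_at_ge1 l r) by lra ] end;
  first [ reflexivity | exfalso; lra | f_equal; lra ].

Section LoopSpace.

Variables (X : PsStr) (x0 : X) (s : filt (CF Ips X) -> CF Ips X -> Prop) (P : PsStr -> Prop).

Local Notation E := {| pcar := CF Ips X; conv := s |}.
Local Notation Omega := (OmegaPs s x0).

Hypothesis X_pseudotop : pseudotop X.
Hypothesis P_prod : forall A B, P A -> P B -> P (prodPs A B).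
Hypothesis P_Ips : P Ips.
Hypothesis P_Omega : P Omega.
Hypothesis ev_cont : continuous (prodPs E Ips) X (fun p => proj1_sig (fst p) (snd p)).
Hypothesis transpose : forall C, P C -> forall h : prodPs C Ips -> X,
  continuous (prodPs C Ips) X h ->
  exists hc : C -> E, continuous C E hc /\ forall c a, proj1_sig (hc c) a = h (c, a).

Definition const_loop : Omega :=
  exist _ (exist _ (fun _ => x0) (cont_const x0 (pseudotop_conv_ultra (pseudotop_top2ps Itop)) X_pseudotop))
    (conj eq_refl eq_refl).

Lemma loop_at_const (r : R) : loop_at const_loop r = x0.
Proof. reflexivity. Qed.

Lemma cont_loop_at {C : PsStr} {F : C -> Omega} {g : C -> R} :
  conv_ultra C -> continuous C Omega F -> real_cont C g ->
  continuous C X (fun c => loop_at (F c) (g c)).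
Proof.
  intros hC hF hg.
  refine (cont_comp (Y := prodPs E Ips) (f := fun c => (proj1_sig (F c), clamp (g c))) _ ev_cont).
  exact (cont_pair hC (cont_comp hF cont_val) (cont_clamp hC hg)).
Qed.

Lemma loop_family {C : PsStr} (h : prodPs C Ips -> X) :
  P C -> conv_ultra C -> continuous (prodPs C Ips) X h ->
  (forall c, h (c, I0) = x0) -> (forall c, h (c, I1) = x0) ->
  exists H : C -> Omega, continuous C Omega H /\ forall c t, loopf (H c) t = h (c, t).
Proof.
  intros PC hC hh h0 h1. destruct (transpose C PC h hh) as [hc [hc_cont hc_h]].
  assert (is_loop : forall c, proj1_sig (hc c) I0 = x0 /\ proj1_sig (hc c) I1 = x0).
  { intros c. rewrite !hc_h. auto. }
  exists (fun c => exist _ (hc c) (is_loop c)). split.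
  - exact (cont_into_sub (Y := E) (fun c => exist _ (hc c) (is_loop c)) hC hc_cont).
  - intros c t. exact (hc_h c t).
Qed.

Lemma exists_loop_concat : exists w : prodPs Omega Omega -> Omega,
  continuous (prodPs Omega Omega) Omega w /\
  forall l l' t, loopf (w (l, l')) t = concat_fun (loopf l) (loopf l') t.
Proof.
  pose (h := fun p : prodPs (prodPs Omega Omega) Ips =>
               concat_fun (loopf (fst (fst p))) (loopf (snd (fst p))) (snd p)).
  assert (t_cont : real_cont (prodPs (prodPs Omega Omega) Ips) (fun p => proj1_sig (snd p))).
  { exact (real_cont_comp cont_snd real_cont_val). }
  assert (h_cont : continuous _ X h).
  { apply cont_glue with (k := fun p => proj1_sig (snd p) - 1/2)
      (g1 := fun p => loop_at (fst (fst p)) (2 * proj1_sig (snd p)))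
      (g2 := fun p => loop_at (snd (fst p)) (2 * proj1_sig (snd p) - 1)).
    - apply conv_ultra_prod.
    - exact (real_cont_minus t_cont (real_cont_const _)).
    - apply cont_loop_at; [apply conv_ultra_prod|exact (cont_comp cont_fst cont_fst)|].
      exact (real_cont_mult (real_cont_const _) t_cont).
    - apply cont_loop_at; [apply conv_ultra_prod|exact (cont_comp cont_fst cont_snd)|].
      exact (real_cont_minus (real_cont_mult (real_cont_const _) t_cont) (real_cont_const _)).
    - intros [lp [t t01]] t_le. cbv beta in t_le. simpl in t_le. unfold h, concat_fun. simpl.
      destruct Rle_dec; [reflexivity|lra].
    - intros [lp [t t01]] t_ge. cbv beta in t_ge. simpl in t_ge. unfold h, concat_fun. simpl.
      destruct Rle_dec; [|reflexivity].
      change (loop_at (fst lp) (2 * t) = loop_at (snd lp) (2 * t - 1)).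
      rewrite (loop_at_ge1 _ (2 * t)), (loop_at_le0 _ (2 * t - 1)); [reflexivity|lra..]. }
  assert (h0 : forall c, h (c, I0) = x0).
  { intros c. unfold h, concat_fun. simpl. destruct Rle_dec; [apply loop_at_le0|]; lra. }
  assert (h1 : forall c, h (c, I1) = x0).
  { intros c. unfold h, concat_fun. simpl. destruct Rle_dec; [lra|apply loop_at_ge1; lra]. }
  destruct (loop_family h (P_prod _ _ P_Omega P_Omega) conv_ultra_prod h_cont h0 h1)
    as [w [w_cont w_h]].
  exists w. split; [exact w_cont|]. intros l l' t. exact (w_h (l, l') t).
Qed.

Lemma exists_loop_inv : exists sg : Omega -> Omega,
  continuous Omega Omega sg /\ forall l t, loopf (sg l) t = inv_fun (loopf l) t.
Proof.
  pose (h := fun p : prodPs Omega Ips => loop_at (fst p) (1 - proj1_sig (snd p))).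
  assert (h_cont : continuous _ X h).
  { apply (cont_loop_at conv_ultra_prod cont_fst).
    exact (real_cont_minus (real_cont_const _) (real_cont_comp cont_snd real_cont_val)). }
  assert (h0 : forall l, h (l, I0) = x0) by (intros l; apply loop_at_ge1; simpl; lra).
  assert (h1 : forall l, h (l, I1) = x0) by (intros l; apply loop_at_le0; simpl; lra).
  destruct (loop_family h P_Omega conv_ultra_sub h_cont h0 h1) as [sg [sg_cont sg_h]].
  exists sg. split; [exact sg_cont|]. intros l t. exact (sg_h l t).
Qed.

Lemma reparam_phomotopic {C : PsStr} (c0 : C) (F f g : C -> Omega) (phi0 phi1 : R -> R) :
  P C -> continuous C Omega F -> F c0 = const_loop ->
  real_cont Ips (fun t => phi0 (proj1_sig t)) -> real_cont Ips (fun t => phi1 (proj1_sig t)) ->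
  phi0 0 = phi1 0 -> phi0 1 = phi1 1 ->
  (phi1 0 <= 0 \/ 1 <= phi1 0) -> (phi1 1 <= 0 \/ 1 <= phi1 1) ->
  (forall c r, 0 <= r <= 1 -> loop_at (f c) r = loop_at (F c) (phi0 r)) ->
  (forall c r, 0 <= r <= 1 -> loop_at (g c) r = loop_at (F c) (phi1 r)) ->
  phomotopic C Omega c0 const_loop f g.
Proof.
  intros PC F_cont F_c0 phi0_cont phi1_cont phi_0 phi_1 phi1_0 phi1_1 f_phi0 g_phi1.
  pose (h := fun p : prodPs (prodPs C Ips) Ips =>
    loop_at (F (fst (fst p))) ((1 - proj1_sig (snd (fst p))) * phi0 (proj1_sig (snd p))
                               + proj1_sig (snd (fst p)) * phi1 (proj1_sig (snd p)))).
  assert (h_cont : continuous _ X h).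
  { assert (s_cont : real_cont (prodPs (prodPs C Ips) Ips) (fun p => proj1_sig (snd (fst p))))
      by exact (real_cont_comp (cont_comp cont_fst cont_snd) real_cont_val).
    apply (cont_loop_at conv_ultra_prod (cont_comp (cont_comp cont_fst cont_fst) F_cont)).
    apply real_cont_plus; apply real_cont_mult.
    - exact (real_cont_minus (real_cont_const _) s_cont).
    - exact (real_cont_comp cont_snd phi0_cont).
    - exact s_cont.
    - exact (real_cont_comp cont_snd phi1_cont). }
  assert (h0 : forall p, h (p, I0) = x0).
  { intros p. apply loop_at_off_unit. simpl. rewrite phi_0.
    replace (_ * _ + _ * _) with (phi1 0) by ring. exact phi1_0. }
  assert (h1 : forall p, h (p, I1) = x0).
  { intros p. apply loop_at_off_unit. simpl. rewrite phi_1.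
    replace (_ * _ + _ * _) with (phi1 1) by ring. exact phi1_1. }
  destruct (loop_family h (P_prod _ _ PC P_Ips) conv_ultra_prod h_cont h0 h1) as [H [H_cont H_h]].
  exists H. split; [exact H_cont|]. split; [|split].
  - intros c. apply loop_ext. intros r r01. unfold loop_at at 1. rewrite H_h, f_phi0 by exact r01.
    unfold h. simpl. fold (clampR r). rewrite (clampR_id r r01). f_equal. ring.
  - intros c. apply loop_ext. intros r r01. unfold loop_at at 1. rewrite H_h, g_phi1 by exact r01.
    unfold h. simpl. fold (clampR r). rewrite (clampR_id r r01). f_equal. ring.
  - intros sg. apply loop_ext. intros r _. unfold loop_at at 1. rewrite H_h.
    unfold h. simpl. rewrite F_c0. reflexivity.
Qed.

Section Laws.

Variables (w : prodPs Omega Omega -> Omega) (sg : Omega -> Omega).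
Hypothesis w_cont : continuous (prodPs Omega Omega) Omega w.
Hypothesis w_concat : forall l l' t, loopf (w (l, l')) t = concat_fun (loopf l) (loopf l') t.
Hypothesis sg_cont : continuous Omega Omega sg.
Hypothesis sg_inv : forall l t, loopf (sg l) t = inv_fun (loopf l) t.

Lemma loop_at_concat (l l' : Omega) (r : R) :
  loop_at (w (l, l')) r = if Rle_dec r (1/2) then loop_at l (2 * r) else loop_at l' (2 * r - 1).
Proof.
  destruct (Rlt_or_le r 0) as [r_lt0|r_ge0]; [|destruct (Rlt_or_le 1 r) as [r_gt1|r_le1]].
  - rewrite loop_at_le0 by lra. destruct Rle_dec; [rewrite loop_at_le0 by lra; reflexivity|lra].
  - rewrite loop_at_ge1 by lra. destruct Rle_dec; [lra|rewrite loop_at_ge1 by lra; reflexivity].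
  - unfold loop_at at 1. rewrite w_concat. unfold concat_fun. simpl. fold (clampR r).
    rewrite clampR_id by lra. reflexivity.
Qed.

Lemma loop_at_inv (l : Omega) (r : R) : loop_at (sg l) r = loop_at l (1 - r).
Proof.
  destruct (Rlt_or_le r 0) as [r_lt0|r_ge0]; [|destruct (Rlt_or_le 1 r) as [r_gt1|r_le1]].
  - rewrite loop_at_le0, loop_at_ge1 by lra. reflexivity.
  - rewrite loop_at_ge1, loop_at_le0 by lra. reflexivity.
  - unfold loop_at at 1. rewrite sg_inv. unfold inv_fun. simpl. fold (clampR r).
    rewrite clampR_id by lra. reflexivity.
Qed.

Lemma concat_const : w (const_loop, const_loop) = const_loop.
Proof. apply loop_ext. intros r _. rewrite loop_at_concat. destruct Rle_dec; reflexivity. Qed.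

Lemma inv_const : sg const_loop = const_loop.
Proof. apply loop_ext. intros r _. rewrite loop_at_inv. reflexivity. Qed.

Ltac reparam_side :=
  match goal with
  | |- real_cont Ips _ => real_cont_Ips
  | |- forall c r, _ -> _ =>
      intros c r r01; cbv beta; rewrite ?loop_at_concat, ?loop_at_inv, ?loop_at_const; loop_arith
  | |- _ => clamp_arith
  end.

Lemma concat_const_r_phomotopic :
  phomotopic Omega Omega const_loop const_loop (fun l => w (l, const_loop)) (fun l => l).
Proof.
  apply (reparam_phomotopic const_loop (fun l => l) _ _ (fun r => clampR (2 * r)) (fun r => r));
    [exact P_Omega|exact cont_id|reflexivity|..]; reparam_side.
Qed.

Lemma concat_const_l_phomotopic :
  phomotopic Omega Omega const_loop const_loop (fun l => w (const_loop, l)) (fun l => l).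
Proof.
  apply (reparam_phomotopic const_loop (fun l => l) _ _ (fun r => clampR (2 * r - 1)) (fun r => r));
    [exact P_Omega|exact cont_id|reflexivity|..]; reparam_side.
Qed.

Lemma concat_inv_r_phomotopic :
  phomotopic Omega Omega const_loop const_loop (fun l => w (l, sg l)) (fun _ => const_loop).
Proof.
  (* [phi0] runs through [[0,1]] on [[0,1/2]] and back on [[1/2,1]]. *)
  apply (reparam_phomotopic const_loop (fun l => l) _ _
           (fun r => 2 * r - 2 * clampR (2 * r - 1)) (fun _ => 0));
    [exact P_Omega|exact cont_id|reflexivity|..]; reparam_side.
Qed.

Lemma concat_inv_l_phomotopic :
  phomotopic Omega Omega const_loop const_loop (fun l => w (sg l, l)) (fun _ => const_loop).
Proof.
  (* [w (sg l, l)] is [w (l', sg l')] for [l' = sg l], as inversion is involutive. *)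
  apply (reparam_phomotopic const_loop sg _ _
           (fun r => 2 * r - 2 * clampR (2 * r - 1)) (fun _ => 0));
    [exact P_Omega|exact sg_cont|exact inv_const|..]; reparam_side.
Qed.

Lemma concat_assoc_phomotopic :
  phomotopic (prodPs (prodPs Omega Omega) Omega) Omega ((const_loop, const_loop), const_loop)
    const_loop
    (fun p => w (w (fst (fst p), snd (fst p)), snd p))
    (fun p => w (fst (fst p), w (snd (fst p), snd p))).
Proof.
  pose (F := fun p : prodPs (prodPs Omega Omega) Omega => w (fst (fst p), w (snd (fst p), snd p))).
  assert (F_cont : continuous _ Omega F).
  { refine (cont_comp (cont_pair conv_ultra_prod (cont_comp cont_fst cont_fst) _) w_cont).
    exact (cont_comp (cont_pair conv_ultra_prod (cont_comp cont_fst cont_snd) cont_snd) w_cont). }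
  (* [phi0] maps [[0,1/4]], [[1/4,1/2]], [[1/2,1]] affinely onto [[0,1/2]], [[1/2,3/4]], [[3/4,1]]. *)
  apply (reparam_phomotopic _ F _ _
           (fun r => 2 * r - clampR (r - 1/4) - 1/2 * clampR (r - 1/2)) (fun r => r));
    [exact (P_prod _ _ (P_prod _ _ P_Omega P_Omega) P_Omega)|exact F_cont
    |unfold F; cbn [fst snd]; rewrite !concat_const; reflexivity|..]; unfold F; reparam_side.
Qed.

Lemma loop_space_Hgroup : Hgroup const_loop w sg.
Proof.
  split; [exact w_cont|]. split; [exact concat_const|].
  split; [exact sg_cont|]. split; [exact inv_const|].
  split; [exact concat_const_r_phomotopic|]. split; [exact concat_const_l_phomotopic|].
  split; [exact concat_inv_r_phomotopic|]. split; [exact concat_inv_l_phomotopic|].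
  exact concat_assoc_phomotopic.
Qed.

End Laws.

Lemma loops_Hgroup_of_exp_structure : @loops_Hgroup X x0 s.
Proof.
  destruct exists_loop_concat as [w [w_cont w_concat]].
  destruct exists_loop_inv as [sg [sg_cont sg_inv]].
  exists const_loop, w, sg.
  split; [reflexivity|]. split; [exact w_concat|]. split; [exact sg_inv|].
  exact (loop_space_Hgroup w sg w_cont w_concat sg_cont sg_inv).
Qed.

End LoopSpace.

Theorem proposition5p4 :
  (forall (X : PsStr) (x0 : X), pseudotop X -> @loops_Hgroup X x0 (@exp_conv Ips X)) /\
  (forall (X' : PsStr) (x0' : X'), epitop X' ->
     forall s : filt (CF Ips X') -> CF Ips X' -> Prop,
       @epi_exp_structure Ips X' s -> @loops_Hgroup X' x0' s).
Proof.
  split.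
  - intros X x0 X_pseudotop.
    apply (loops_Hgroup_of_exp_structure X x0 _ pseudotop X_pseudotop).
    + intros A B; apply pseudotop_prod.
    + apply pseudotop_top2ps.
    + apply pseudotop_sub, pseudotop_exp.
    + exact exp_ev.
    + intros C C_pseudotop h h_cont.
      exact (exp_transpose h C_pseudotop (pseudotop_conv_ultra (pseudotop_top2ps Itop)) h_cont).
  - intros X x0 X_epitop s [E_epitop [ev_cont transpose]].
    apply (loops_Hgroup_of_exp_structure X x0 s epitop (proj1 X_epitop)).
    + intros A B; apply epitop_prod.
    + exact epitop_Ips.
    + exact (epitop_sub _ E_epitop).
    + exact ev_cont.
    + exact transpose.
Qed.
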